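(* Let $x_\circ$ be the unique solution of $\Psi_{6.74}(x)=x$ in $[\frac38,\frac12]$. Then $\Phi_3(6.74,x_\circ)>0$.
   Context: $\Psi_d=\dot\Psi\circ\hat\Psi$ with $\hat\Psi(x)=\frac{1-2x^{2}}{1-x^{2}}$, $\dot\Psi(v)=\frac{1-v^{d-1}}{2-v^{d-1}}$; $\Phi_3(d,x)=-\log(1-x)-d(\frac23-d^{-1})\log(1-2x^3)+(d-1)\log(1-x^{2})$. (Existence and uniqueness of $x_\circ$ is known.) *)

From Stdlib Require Import Reals.
Open Scope R_scope.

Definition hatPsi (x : R) : R := (1 - 2 * x ^ 2) / (1 - x ^ 2).

Definition dotPsi (d v : R) : R :=
  (1 - Rpower v (d - 1)) / (2 - Rpower v (d - 1)).

Definition Psi (d x : R) : R := dotPsi d (hatPsi x).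

Definition Phi3 (d x : R) : R :=
  - ln (1 - x) - d * (2 / 3 - / d) * ln (1 - 2 * x ^ 3)
  + (d - 1) * ln (1 - x ^ 2).

Definition d0 : R := 674 / 100.

(* A fixed point x of Psi_d satisfies 1 - 2x = hatPsi(x)^(d-1) (1 - x), i.e. the gap
   (d-1) ln hatPsi(x) + ln(1-x) - ln(1-2x) vanishes.  For d = 6.74 the derivative of the gap
   has positive denominator and increasing numerator on [3/8, 25/56], so the gap first
   decreases, then increases, and stays below its two negative endpoint values: hence
   x > 25/56.  On [25/56, 1/2] Phi3(d, .) is increasing and already positive at 25/56.
   The margins are tiny (x ~ 0.44654, while Phi3(d, .) vanishes near 0.44630), so the three
   endpoint values are certified by exact rational bounds on large powers. *)

From Stdlib Require Import Reals Lra Psatz ZArith.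
From Coquelicot Require Import Coquelicot.
Open Scope R_scope.

Lemma nondecr_function_le (f df : R -> R) (a b : R) : a <= b ->
  (forall z, a <= z <= b -> is_derive f z (df z)) ->
  (forall z, a <= z <= b -> 0 <= df z) -> f a <= f b.
Proof.
  intros Hab Hf Hdf.
  destruct (MVT_gen f a b df) as (c & Hc & Hmvt).
  - intros z Hz; apply Hf; rewrite Rmin_left, Rmax_right in Hz; lra.
  - intros z Hz; rewrite Rmin_left, Rmax_right in Hz by lra.
    apply continuity_pt_filterlim, (ex_derive_continuous (V := R_NormedModule) f).
    exists (df z); apply Hf; lra.
  - rewrite Rmin_left, Rmax_right in Hc by lra.
    assert (0 <= df c * (b - a)) by (apply Rmult_le_pos; [apply Hdf|]; lra).
    lra.
Qed.

Section SingleSignChange.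

Variables (f N D : R -> R) (a b : R).
Hypothesis f_derive : forall z, a <= z <= b -> is_derive f z (N z / D z).
Hypothesis D_pos : forall z, a <= z <= b -> 0 < D z.
Hypothesis N_nondecr : forall z1 z2, a <= z1 -> z1 <= z2 -> z2 <= b -> N z1 <= N z2.

Lemma le_Rmax_ends_of_derive_numer_nondecr y : a <= y <= b -> f y <= Rmax (f a) (f b).
Proof.
  intros Hy.
  destruct (Rlt_or_le (N y) 0) as [Hneg | Hnonneg].
  - apply Rle_trans with (f a); [|apply Rmax_l].
    cut (- f a <= - f y); [lra|].
    apply (nondecr_function_le (fun z => - f z) (fun z => - (N z / D z))); [lra| |].
    + intros z Hz; apply (is_derive_opp f); apply f_derive; lra.
    + intros z Hz.
      assert (N z <= N y) by (apply N_nondecr; lra).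
      assert (0 < D z) by (apply D_pos; lra).
      assert (N z / D z < 0) by (apply Rdiv_neg_pos; lra).
      lra.
  - apply Rle_trans with (f b); [|apply Rmax_r].
    apply (nondecr_function_le f (fun z => N z / D z)); [lra| |].
    + intros z Hz; apply f_derive; lra.
    + intros z Hz.
      assert (N y <= N z) by (apply N_nondecr; lra).
      assert (0 < D z) by (apply D_pos; lra).
      apply Rdiv_le_0_compat; lra.
Qed.

End SingleSignChange.

Lemma pow_lt_ln_lt (X Y Z : R) (k1 k2 k3 : nat) : X ^ k1 * Y ^ k2 < Z ^ k3 ->
  0 < X -> 0 < Y -> 0 < Z -> INR k1 * ln X + INR k2 * ln Y < INR k3 * ln Z.
Proof.
  intros H HX HY HZ.
  rewrite <- !ln_pow, <- ln_mult by (try apply pow_lt; assumption).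
  apply ln_increasing; [|assumption].
  apply Rmult_lt_0_compat; apply pow_lt; assumption.
Qed.

(* Outward-rounded dyadic arithmetic with 64-bit mantissas: the exact integers behind
   powers such as (2511/3136)^861 have thousands of digits, too many for kernel reduction. *)
Definition dyadic : Set := (Z * Z)%type.

Definition dval (x : dyadic) : R := IZR (fst x) * powerRZ 2 (snd x).

Definition prec : Z := 64.

Definition dround_up (x : dyadic) : dyadic :=
  let j := Z.max 0 (Z.log2 (fst x) - prec) in (Z.shiftr (fst x) j + 1, snd x + j)%Z.

Definition dround_dn (x : dyadic) : dyadic :=
  let j := Z.max 0 (Z.log2 (fst x) - prec) in (Z.shiftr (fst x) j, snd x + j)%Z.

Definition dmul_up (x y : dyadic) : dyadic := dround_up (fst x * fst y, snd x + snd y)%Z.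

Definition dmul_dn (x y : dyadic) : dyadic := dround_dn (fst x * fst y, snd x + snd y)%Z.

Fixpoint dpow_up (x : dyadic) (n : positive) : dyadic :=
  match n with
  | xH => x
  | xO p => let y := dpow_up x p in dmul_up y y
  | xI p => let y := dpow_up x p in dmul_up (dmul_up y y) x
  end.

Fixpoint dpow_dn (x : dyadic) (n : positive) : dyadic :=
  match n with
  | xH => x
  | xO p => let y := dpow_dn x p in dmul_dn y y
  | xI p => let y := dpow_dn x p in dmul_dn (dmul_dn y y) x
  end.

Definition ddiv_up (p q : Z) : dyadic := (Z.shiftl p prec / q + 1, - prec)%Z.

Definition ddiv_dn (p q : Z) : dyadic := (Z.shiftl p prec / q, - prec)%Z.

Definition dltb (x y : dyadic) : bool :=
  let e := Z.min (snd x) (snd y) in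
  (Z.shiftl (fst x) (snd x - e) <? Z.shiftl (fst y) (snd y - e))%Z.

Definition dyadic_ub (x : dyadic) (u : R) : Prop := (0 <= fst x)%Z /\ u <= dval x.

Definition dyadic_lb (x : dyadic) (u : R) : Prop := (0 <= fst x)%Z /\ dval x <= u.

Lemma IZR_pow2 j : (0 <= j)%Z -> IZR (2 ^ j) = powerRZ 2 j.
Proof.
  intros Hj; destruct j as [| p | p]; [reflexivity | | lia].
  exact (Zpower_pos_powerRZ 2 p).
Qed.

Lemma dval_shiftl m e e' : (e' <= e)%Z ->
  dval (m, e) = dval (Z.shiftl m (e - e'), e').
Proof.
  intros He; unfold dval; simpl.
  rewrite Z.shiftl_mul_pow2, mult_IZR, IZR_pow2 by lia.
  rewrite Rmult_assoc, <- powerRZ_add by lra.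
  now replace (e - e' + e')%Z with e by ring.
Qed.

Lemma dval_le_same_exp m1 m2 e : (m1 <= m2)%Z -> dval (m1, e) <= dval (m2, e).
Proof.
  intros Hm; unfold dval; simpl.
  apply Rmult_le_compat_r; [apply powerRZ_le; lra | now apply IZR_le].
Qed.

Lemma dval_nonneg x : (0 <= fst x)%Z -> 0 <= dval x.
Proof.
  intros Hx; unfold dval; apply Rmult_le_pos; [now apply IZR_le | apply powerRZ_le; lra].
Qed.

Lemma dval_mul x y : dval (fst x * fst y, snd x + snd y)%Z = dval x * dval y.
Proof. unfold dval; simpl; rewrite mult_IZR, powerRZ_add by lra; ring. Qed.

Lemma dround_up_ub x u : dyadic_ub x u -> dyadic_ub (dround_up x) u.
Proof.
  destruct x as [m e]; unfold dyadic_ub, dround_up; simpl.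
  set (j := Z.max 0 (Z.log2 m - prec)); intros [Hm Hu].
  assert (Hj : (0 <= j)%Z) by lia.
  assert (H2j : (0 < 2 ^ j)%Z) by (apply Z.pow_pos_nonneg; lia).
  rewrite Z.shiftr_div_pow2 by exact Hj.
  split; [assert (0 <= m / 2 ^ j)%Z by (apply Z.div_pos; lia); lia |].
  rewrite (dval_shiftl _ (e + j) e), Z.shiftl_mul_pow2 by lia.
  replace (e + j - e)%Z with j by ring.
  apply Rle_trans with (1 := Hu), dval_le_same_exp.
  pose proof (Z.mul_succ_div_gt m (2 ^ j) H2j) as Hq.
  revert Hq; generalize (m / 2 ^ j)%Z (2 ^ j)%Z; intros q t Hq; lia.
Qed.

Lemma dround_dn_lb x u : dyadic_lb x u -> dyadic_lb (dround_dn x) u.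
Proof.
  destruct x as [m e]; unfold dyadic_lb, dround_dn; simpl.
  set (j := Z.max 0 (Z.log2 m - prec)); intros [Hm Hu].
  assert (Hj : (0 <= j)%Z) by lia.
  assert (H2j : (0 < 2 ^ j)%Z) by (apply Z.pow_pos_nonneg; lia).
  rewrite Z.shiftr_div_pow2 by exact Hj.
  split; [apply Z.div_pos; lia |].
  rewrite (dval_shiftl _ (e + j) e), Z.shiftl_mul_pow2 by lia.
  replace (e + j - e)%Z with j by ring.
  apply Rle_trans with (2 := Hu), dval_le_same_exp.
  pose proof (Z.mul_div_le m (2 ^ j) H2j) as Hq.
  revert Hq; generalize (m / 2 ^ j)%Z (2 ^ j)%Z; intros q t Hq; lia.
Qed.

Lemma dmul_up_ub x y u v : 0 <= u -> 0 <= v -> dyadic_ub x u -> dyadic_ub y v ->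
  dyadic_ub (dmul_up x y) (u * v).
Proof.
  intros Hu Hv [Hx Hxu] [Hy Hyv]; apply dround_up_ub; split; simpl; [lia |].
  rewrite dval_mul; apply Rmult_le_compat; assumption.
Qed.

Lemma dmul_dn_lb x y u v : dyadic_lb x u -> dyadic_lb y v -> dyadic_lb (dmul_dn x y) (u * v).
Proof.
  intros [Hx Hxu] [Hy Hyv]; apply dround_dn_lb; split; simpl; [lia |].
  rewrite dval_mul; apply Rmult_le_compat; try apply dval_nonneg; assumption.
Qed.

Lemma pow_Pos_xO u p : u ^ Pos.to_nat (xO p) = u ^ Pos.to_nat p * u ^ Pos.to_nat p.
Proof. rewrite Pos2Nat.inj_xO, <- pow_add; f_equal; lia. Qed.

Lemma pow_Pos_xI u p : u ^ Pos.to_nat (xI p) = u ^ Pos.to_nat p * u ^ Pos.to_nat p * u.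
Proof.
  rewrite Pos2Nat.inj_xI, <- pow_add, Rmult_comm.
  now replace (2 * Pos.to_nat p)%nat with (Pos.to_nat p + Pos.to_nat p)%nat by lia.
Qed.

Lemma dpow_up_ub x u n : 0 <= u -> dyadic_ub x u -> dyadic_ub (dpow_up x n) (u ^ Pos.to_nat n).
Proof.
  intros Hu Hx; induction n as [p IH | p IH |]; simpl dpow_up.
  - rewrite pow_Pos_xI.
    apply dmul_up_ub; try apply Rmult_le_pos; try apply pow_le; auto.
    apply dmul_up_ub; try apply pow_le; auto.
  - rewrite pow_Pos_xO; apply dmul_up_ub; try apply pow_le; auto.
  - now rewrite pow_1.
Qed.

Lemma dpow_dn_lb x u n : dyadic_lb x u -> dyadic_lb (dpow_dn x n) (u ^ Pos.to_nat n).
Proof.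
  intros Hx; induction n as [p IH | p IH |]; simpl dpow_dn.
  - rewrite pow_Pos_xI; apply dmul_dn_lb; [apply dmul_dn_lb |]; assumption.
  - rewrite pow_Pos_xO; apply dmul_dn_lb; assumption.
  - now rewrite pow_1.
Qed.

Lemma Rdiv_le_cross a b c d : 0 < b -> 0 < d -> a * d <= c * b -> a / b <= c / d.
Proof.
  intros Hb Hd H; apply (Rmult_le_reg_r (b * d)); [nra |].
  replace (a / b * (b * d)) with (a * d) by (field; lra).
  replace (c / d * (b * d)) with (c * b) by (field; lra).
  exact H.
Qed.

Lemma dval_div_prec m : dval (m, - prec)%Z = IZR m / IZR (2 ^ prec).
Proof.
  unfold dval, Rdiv; cbn [fst snd]; f_equal.
  rewrite IZR_pow2 by (unfold prec; lia).
  apply (Rmult_eq_reg_r (powerRZ 2 prec)); [| apply powerRZ_NOR; lra].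
  rewrite <- powerRZ_add, Rinv_l by (try apply powerRZ_NOR; lra).
  now replace (- prec + prec)%Z with 0%Z by ring.
Qed.

Lemma ddiv_up_ub p q : (0 <= p)%Z -> (0 < q)%Z -> dyadic_ub (ddiv_up p q) (IZR p / IZR q).
Proof.
  intros Hp Hq; unfold dyadic_ub, ddiv_up; cbn [fst snd].
  rewrite dval_div_prec, Z.shiftl_mul_pow2 by (unfold prec; lia).
  assert (HT : (0 < 2 ^ prec)%Z) by (apply Z.pow_pos_nonneg; unfold prec; lia).
  pose proof (Z.mul_succ_div_gt (p * 2 ^ prec) q Hq) as Hdiv.
  revert Hdiv HT; generalize (2 ^ prec)%Z (p * 2 ^ prec / q)%Z; intros T N Hdiv HT.
  split.
  - nia.
  - apply Rdiv_le_cross; try (apply IZR_lt; lia).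
    rewrite <- !mult_IZR; apply IZR_le; lia.
Qed.

Lemma ddiv_dn_lb p q : (0 <= p)%Z -> (0 < q)%Z -> dyadic_lb (ddiv_dn p q) (IZR p / IZR q).
Proof.
  intros Hp Hq; unfold dyadic_lb, ddiv_dn; cbn [fst snd].
  rewrite dval_div_prec, Z.shiftl_mul_pow2 by (unfold prec; lia).
  assert (HT : (0 < 2 ^ prec)%Z) by (apply Z.pow_pos_nonneg; unfold prec; lia).
  split; [apply Z.div_pos; nia |].
  pose proof (Z.mul_div_le (p * 2 ^ prec) q Hq) as Hdiv.
  revert Hdiv HT; generalize (2 ^ prec)%Z (p * 2 ^ prec / q)%Z; intros T N Hdiv HT.
  apply Rdiv_le_cross; try (apply IZR_lt; lia).
  rewrite <- !mult_IZR; apply IZR_le; lia.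
Qed.

Lemma dltb_spec x y : dltb x y = true -> dval x < dval y.
Proof.
  destruct x as [m1 e1], y as [m2 e2]; unfold dltb; simpl; intros Hlt.
  rewrite (dval_shiftl m1 e1 (Z.min e1 e2)), (dval_shiftl m2 e2 (Z.min e1 e2)) by lia.
  unfold dval; simpl.
  apply Rmult_lt_compat_r; [apply powerRZ_lt; lra |].
  apply IZR_lt, Z.ltb_lt, Hlt.
Qed.

Lemma pow_mul_pow_lt_of_dltb (p1 q1 p2 q2 p3 q3 : Z) (n1 n2 n3 : positive) :
  (0 <= p1)%Z -> (0 < q1)%Z -> (0 <= p2)%Z -> (0 < q2)%Z -> (0 <= p3)%Z -> (0 < q3)%Z ->
  dltb (dmul_up (dpow_up (ddiv_up p1 q1) n1) (dpow_up (ddiv_up p2 q2) n2))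
       (dpow_dn (ddiv_dn p3 q3) n3) = true ->
  (IZR p1 / IZR q1) ^ Pos.to_nat n1 * (IZR p2 / IZR q2) ^ Pos.to_nat n2
    < (IZR p3 / IZR q3) ^ Pos.to_nat n3.
Proof.
  intros Hp1 Hq1 Hp2 Hq2 Hp3 Hq3 Hcmp.
  assert (Hnonneg : forall p q, (0 <= p)%Z -> (0 < q)%Z -> 0 <= IZR p / IZR q).
  { intros p q Hp Hq; apply Rmult_le_pos;
      [apply IZR_le; lia | apply Rlt_le, Rinv_0_lt_compat, IZR_lt; lia]. }
  destruct (dmul_up_ub _ _ _ _ (pow_le _ (Pos.to_nat n1) (Hnonneg _ _ Hp1 Hq1))
              (pow_le _ (Pos.to_nat n2) (Hnonneg _ _ Hp2 Hq2))
              (dpow_up_ub _ _ n1 (Hnonneg _ _ Hp1 Hq1) (ddiv_up_ub _ _ Hp1 Hq1))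
              (dpow_up_ub _ _ n2 (Hnonneg _ _ Hp2 Hq2) (ddiv_up_ub _ _ Hp2 Hq2)))
    as [_ Hup].
  destruct (dpow_dn_lb _ _ n3 (ddiv_dn_lb _ _ Hp3 Hq3)) as [_ Hdn].
  pose proof (dltb_spec _ _ Hcmp); lra.
Qed.

Lemma hatPsi_pos x : 0 <= x <= 1 / 2 -> 0 < hatPsi x.
Proof. intros Hx; unfold hatPsi; apply Rdiv_lt_0_compat; nra. Qed.

(* [x <> 0] rules out the junk value [dotPsi d v = 0] when [2 - v^(d-1) = 0]. *)
Lemma Psi_fixpoint_balance d x : x <> 0 -> Psi d x = x ->
  1 - 2 * x = Rpower (hatPsi x) (d - 1) * (1 - x).
Proof.
  unfold Psi, dotPsi; set (w := Rpower (hatPsi x) (d - 1)); intros Hx Hfix.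
  destruct (Req_dec (2 - w) 0) as [E | E].
  - rewrite E in Hfix; unfold Rdiv in Hfix; rewrite Rinv_0, Rmult_0_r in Hfix.
    now destruct Hx.
  - rewrite <- Hfix; field; exact E.
Qed.

Definition fixpoint_gap (d y : R) : R :=
  (d - 1) * ln (hatPsi y) + ln (1 - y) - ln (1 - 2 * y).

Lemma fixpoint_gap_Psi_fixpoint d x : 0 < x <= 1 / 2 -> Psi d x = x ->
  fixpoint_gap d x = 0.
Proof.
  intros Hx Hfix.
  pose proof (Psi_fixpoint_balance d x ltac:(lra) Hfix) as Hbal.
  assert (Hw : 0 < Rpower (hatPsi x) (d - 1)) by apply exp_pos.
  unfold fixpoint_gap; rewrite Hbal, ln_mult, ln_Rpower by (try apply hatPsi_pos; lra).
  ring.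
Qed.

Definition fixpoint_gap_deriv_num (d z : R) : R :=
  (1 - 2 * z ^ 2) * (1 - z ^ 2) - 2 * (d - 1) * z * (1 - 2 * z) * (1 - z).

Lemma is_derive_fixpoint_gap d z : 0 <= z < 1 / 2 ->
  is_derive (fixpoint_gap d) z
    (fixpoint_gap_deriv_num d z / ((1 - 2 * z) * (1 - z) * (1 - 2 * z ^ 2) * (1 - z ^ 2))).
Proof.
  intros Hz; unfold fixpoint_gap, fixpoint_gap_deriv_num, hatPsi.
  auto_derive.
  - repeat split; try apply Rdiv_lt_0_compat; nra.
  - field; repeat split; nra.
Qed.

Definition Phi3_deriv_num (d z : R) : R :=
  (1 + z) * (1 - 2 * z ^ 3) + 6 * (d * (2 / 3 - / d)) * z ^ 2 * (1 - z ^ 2)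
  - 2 * (d - 1) * z * (1 - 2 * z ^ 3).

Lemma is_derive_Phi3 d z : 0 <= z <= 1 / 2 ->
  is_derive (Phi3 d) z (Phi3_deriv_num d z / ((1 - z ^ 2) * (1 - 2 * z ^ 3))).
Proof.
  intros Hz; unfold Phi3, Phi3_deriv_num.
  generalize (d * (2 / 3 - / d)); intros a.
  auto_derive.
  - repeat split; nra.
  - field; repeat split; nra.
Qed.

Lemma d0_Phi3_coeff : d0 * (2 / 3 - / d0) = 262 / 75.
Proof. unfold d0; field. Qed.

Lemma fixpoint_gap_deriv_num_d0_nondecr z1 z2 : 3 / 8 <= z1 -> z1 <= z2 -> z2 <= 25 / 56 ->
  fixpoint_gap_deriv_num d0 z1 <= fixpoint_gap_deriv_num d0 z2.
Proof.
  intros H1 H12 H2.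
  set (s := z1 + z2).
  assert (Hfactor : fixpoint_gap_deriv_num d0 z2 - fixpoint_gap_deriv_num d0 z1
    = (z2 - z1) * (- 3 * s + 2 * s * (z1 ^ 2 + z2 ^ 2)
                   - 287 / 25 * (1 - 3 * s + 2 * (z1 ^ 2 + z1 * z2 + z2 ^ 2)))).
  { unfold fixpoint_gap_deriv_num, d0, s; field. }
  assert (0 <= - 3 * s + 2 * s * (z1 ^ 2 + z2 ^ 2)
               - 287 / 25 * (1 - 3 * s + 2 * (z1 ^ 2 + z1 * z2 + z2 ^ 2))).
  { unfold s; nra. }
  nra.
Qed.

Lemma fixpoint_gap_d0_at_3_8 : fixpoint_gap d0 (3 / 8) < 0.
Proof.
  unfold fixpoint_gap, hatPsi, d0.
  replace ((1 - 2 * (3 / 8) ^ 2) / (1 - (3 / 8) ^ 2)) with (46 / 55) by field.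
  replace (1 - 3 / 8) with (5 / 8) by field.
  replace (1 - 2 * (3 / 8)) with (1 / 4) by field.
  assert (Hpow : (46 / 55) ^ 287 * (5 / 8) ^ 50 < (1 / 4) ^ 50).
  { apply (pow_mul_pow_lt_of_dltb 46 55 5 8 1 4 287 50 50);
      [lia .. | vm_compute; reflexivity]. }
  pose proof (pow_lt_ln_lt _ _ _ 287 50 50 Hpow ltac:(lra) ltac:(lra) ltac:(lra)) as L.
  rewrite !INR_IZR_INZ in L; simpl in L.
  lra.
Qed.

Lemma fixpoint_gap_d0_at_25_56 : fixpoint_gap d0 (25 / 56) < 0.
Proof.
  unfold fixpoint_gap, hatPsi, d0.
  replace ((1 - 2 * (25 / 56) ^ 2) / (1 - (25 / 56) ^ 2)) with (1886 / 2511) by field.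
  replace (1 - 25 / 56) with (31 / 56) by field.
  replace (1 - 2 * (25 / 56)) with (3 / 28) by field.
  assert (Hpow : (1886 / 2511) ^ 287 * (31 / 56) ^ 50 < (3 / 28) ^ 50).
  { apply (pow_mul_pow_lt_of_dltb 1886 2511 31 56 3 28 287 50 50);
      [lia .. | vm_compute; reflexivity]. }
  pose proof (pow_lt_ln_lt _ _ _ 287 50 50 Hpow ltac:(lra) ltac:(lra) ltac:(lra)) as L.
  rewrite !INR_IZR_INZ in L; simpl in L.
  lra.
Qed.

Lemma Phi3_d0_at_25_56 : 0 < Phi3 d0 (25 / 56).
Proof.
  unfold Phi3; rewrite d0_Phi3_coeff; unfold d0.
  replace (1 - 25 / 56) with (31 / 56) by field.
  replace (1 - 2 * (25 / 56) ^ 3) with (72183 / 87808) by field.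
  replace (1 - (25 / 56) ^ 2) with (2511 / 3136) by field.
  assert (Hpow : (31 / 56) ^ 150 * (72183 / 87808) ^ 524 < (2511 / 3136) ^ 861).
  { apply (pow_mul_pow_lt_of_dltb 31 56 72183 87808 2511 3136 150 524 861);
      [lia .. | vm_compute; reflexivity]. }
  pose proof (pow_lt_ln_lt _ _ _ 150 524 861 Hpow ltac:(lra) ltac:(lra) ltac:(lra)) as L.
  rewrite !INR_IZR_INZ in L; simpl in L.
  lra.
Qed.

Lemma fixpoint_gap_d0_neg y : 3 / 8 <= y <= 25 / 56 -> fixpoint_gap d0 y < 0.
Proof.
  intros Hy.
  apply Rle_lt_trans with (Rmax (fixpoint_gap d0 (3 / 8)) (fixpoint_gap d0 (25 / 56))).
  - apply (le_Rmax_ends_of_derive_numer_nondecr (fixpoint_gap d0) (fixpoint_gap_deriv_num d0)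
      (fun z => (1 - 2 * z) * (1 - z) * (1 - 2 * z ^ 2) * (1 - z ^ 2))); [| | | exact Hy].
    + intros z Hz; apply is_derive_fixpoint_gap; lra.
    + intros z Hz; repeat apply Rmult_lt_0_compat; nra.
    + exact fixpoint_gap_deriv_num_d0_nondecr.
  - apply Rmax_lub_lt; [exact fixpoint_gap_d0_at_3_8 | exact fixpoint_gap_d0_at_25_56].
Qed.

Lemma Phi3_deriv_num_d0_pos z : 25 / 56 <= z <= 1 / 2 -> 0 < Phi3_deriv_num d0 z.
Proof. intros Hz; unfold Phi3_deriv_num; rewrite d0_Phi3_coeff; unfold d0; nra. Qed.

Lemma Phi3_d0_pos y : 25 / 56 <= y <= 1 / 2 -> 0 < Phi3 d0 y.
Proof.
  intros Hy.
  apply Rlt_le_trans with (Phi3 d0 (25 / 56)); [exact Phi3_d0_at_25_56|].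
  apply (nondecr_function_le (Phi3 d0)
    (fun z => Phi3_deriv_num d0 z / ((1 - z ^ 2) * (1 - 2 * z ^ 3)))); [lra | |].
  - intros z Hz; apply is_derive_Phi3; lra.
  - intros z Hz; apply Rlt_le, Rdiv_lt_0_compat.
    + apply Phi3_deriv_num_d0_pos; lra.
    + apply Rmult_lt_0_compat; nra.
Qed.

Theorem lemma4p5 :
  forall x : R, 3 / 8 <= x <= 1 / 2 -> Psi d0 x = x -> Phi3 d0 x > 0.
Proof.
  intros x Hx Hfix.
  pose proof (fixpoint_gap_Psi_fixpoint d0 x ltac:(lra) Hfix) as Hgap.
  assert (Hlo : 25 / 56 < x).
  { destruct (Rlt_or_le (25 / 56) x) as [Hlt | Hle]; [exact Hlt|].
    pose proof (fixpoint_gap_d0_neg x ltac:(lra)); lra. }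
  apply Phi3_d0_pos; lra.
Qed.
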